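(* For any fixed finite tree $T$ (with at least $2$ vertices), $$\lim_{k\to\infty}\delta(S_k,T)=1,$$ where $S_k$ is the star on $k$ vertices and $\delta(S,T)=\lim_{n\to\infty}\mathrm{TV}(\mathrm{PA}(n,S),\mathrm{PA}(n,T))$.
   Context: For $n\ge k\ge 2$ and a tree $T$ on $k$ vertices, the random tree $\mathrm{PA}(n,T)$ is defined inductively: $\mathrm{PA}(k,T)=T$, and $\mathrm{PA}(n+1,T)$ is obtained from $\mathrm{PA}(n,T)$ by adding a new vertex $u$ and one edge $uv$, where $v$ is chosen among the vertices of $\mathrm{PA}(n,T)$ with probability $d_{\mathrm{PA}(n,T)}(v)/(2(n-1))$ ($d_G(v)$ denotes degree). $\mathrm{TV}$ denotes total variation distance between the laws of the random trees (viewed up to isomorphism); $\mathrm{TV}(\mathrm{PA}(n,S),\mathrm{PA}(n,T))$ is non-increasing in $n$ for $n\ge\max(|S|,|T|)$, so the limit exists. *)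

From HB Require Import structures.
From mathcomp Require Import all_boot all_order all_algebra all_fingroup.
From mathcomp Require Import all_classical all_reals all_analysis.
Set Implicit Arguments. Unset Strict Implicit. Unset Printing Implicit Defensive.
Import Order.TTheory GRing.Theory Num.Theory.
Local Open Scope ring_scope.

(* A (simple, undirected) graph on the vertex set 'I_n, stored as the set of
   ordered pairs (x,y) such that xy is an edge (so each edge appears twice). *)
Definition graph (n : nat) := {set ('I_n * 'I_n)}.

Definition adj n (G : graph n) : rel 'I_n := fun x y => (x, y) \in G.

Definition is_tree n (G : graph n) : Prop :=
  [/\ (forall x y, ((x, y) \in G) = ((y, x) \in G)),
      (forall x, (x, x) \notin G),
      #|G| = (2 * n.-1)%N &
      (forall x y, connect (adj G) x y)].

Definition star (k : nat) : graph k :=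
  [set e : 'I_k * 'I_k | ((val e.1 == 0%N) && (val e.2 != 0%N))
                      || ((val e.2 == 0%N) && (val e.1 != 0%N))].

Definition deg n (G : graph n) (v : 'I_n) : nat := #|[set w | (v, w) \in G]|.

Definition emb k n (T : graph k) : graph n :=
  [set e : 'I_n * 'I_n |
    [exists f in T, (val f.1 == val e.1) && (val f.2 == val e.2)]].

Definition ext m (H : graph m) (v : 'I_m) : graph m.+1 :=
  [set e : 'I_m.+1 * 'I_m.+1 |
    [|| [exists f in H, (val f.1 == val e.1) && (val f.2 == val e.2)],
        (val e.1 == m) && (val e.2 == val v) |
        (val e.2 == m) && (val e.1 == val v)]].

(* PAlaw T n G = probability that PA(n,T) is (the labelled graph) G, where the
   vertices of T keep their labels 0..k-1 and the j-th added vertex gets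
   label j.  Meaningful for n >= k. *)
Fixpoint PAlaw (R : realType) k (T : graph k) (n : nat) : graph n -> R :=
  match n with
  | 0 => fun G => (G == emb 0 T)%:R
  | m.+1 =>
    if (m.+1 <= k)%N then fun G => (G == emb m.+1 T)%:R
    else fun G =>
      \sum_(H : graph m) \sum_(v : 'I_m)
        PAlaw R T H * ((deg H v)%:R / (2 * m.-1)%:R) * (G == ext H v)%:R
  end.

(* events invariant under relabelling = events about the isomorphism class *)
Definition iso_invariant n (A : {set graph n}) : Prop :=
  forall (p : {perm 'I_n}) (G : graph n),
    (G \in A) = ([set (p e.1, p e.2) | e in G] \in A).

Definition prob_ev (R : realType) n (P : graph n -> R) (A : {set graph n}) : R :=
  \sum_(G in A) P G.

Definition TV (R : realType) n (P Q : graph n -> R) : R :=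
  \big[Num.max/0]_(A : {set graph n} | `[< iso_invariant A >])
     `|prob_ev P A - prob_ev Q A|.

Definition TV_PA (R : realType) (n : nat) ks kt (S : graph ks) (T : graph kt) : R :=
  TV (PAlaw R S (n:=n)) (PAlaw R T (n:=n)).

From HB Require Import structures.
From mathcomp Require Import all_boot all_order all_algebra all_fingroup.
From mathcomp Require Import all_classical all_reals all_analysis.
From mathcomp Require Import zify ring lra.
Import Order.TTheory GRing.Theory Num.Theory.
Import numFieldNormedType.Exports.
Local Open Scope ring_scope.
Set Implicit Arguments. Unset Strict Implicit. Unset Printing Implicit Defensive.

(* Attaching one more vertex applies the same Markov kernel to both laws, and
   this kernel commutes with relabelling; hence TV(PA(n,S), PA(n,T)) is
   nonincreasing in n and delta(S,T) exists.
   For the lower bound let a_n be the mean degree of the centre of the star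
   S_(k+1) in PA(n, S_(k+1)).  A second-moment computation shows that the centre
   keeps degree at least a_n/2 with probability at least 1 - 4/k, and
   a_n^4 >= k^3 n (n-1) / (k+1).  Under PA(n,T) the sum over all vertices of
   d (d+1) (d+2) (d+3) has mean O_T(n^2), so by Markov's inequality the
   isomorphism-invariant event "this sum is at least (a_n/2)^4" has probability
   O_T(1/k), while it has probability at least 1 - 4/k under the star.  Hence
   1 - O_T(1/k) <= delta(S_(k+1), T) <= 1. *)

Lemma nat_ind_from (P : nat -> Prop) m :
  P m -> (forall n, (m <= n)%N -> P n -> P n.+1) -> forall n, (m <= n)%N -> P n.
Proof.
move=> Pm PS; elim=> [|n IH]; first by rewrite leqn0 => /eqP <-.
by rewrite leq_eqVlt => /orP[/eqP <- //|]; rewrite ltnS => hn; apply: PS hn (IH hn).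
Qed.

Lemma degE n (G : graph n) x : deg G x = (\sum_y ((x, y) \in G : nat))%N.
Proof.
rewrite /deg -sum1dep_card big_mkcond /=; apply: eq_bigr => y _.
by case: ((x, y) \in G).
Qed.

Lemma sum_deg_card n (G : graph n) : (\sum_v deg G v)%N = #|G|.
Proof.
under eq_bigr do rewrite degE.
rewrite pair_big /= -sum1_card [RHS]big_mkcond /=.
by apply: eq_bigr => -[x y] _ /=; case: ((x, y) \in G).
Qed.

Lemma emb_id k (T : graph k) : emb k T = T.
Proof.
apply/setP => -[x y]; rewrite inE; apply/existsP/idP.
  case=> -[a b] /andP[hf /= /andP[/eqP/val_inj <- /eqP/val_inj <-]] //.
by move=> h; exists (x, y); rewrite h !eqxx.
Qed.

Section Ext.
Variables (m : nat) (H : graph m) (v : 'I_m).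
Local Notation w := (widen_ord (leqnSn m)).

Lemma ext_widen x y : ((w x, w y) \in ext H v) = ((x, y) \in H).
Proof.
rewrite inE /= !(ltn_eqF (ltn_ord x)) !(ltn_eqF (ltn_ord y)) /= !orbF.
apply/existsP/idP.
  case=> -[a b] /andP[hf /= /andP[/eqP/val_inj <- /eqP/val_inj <-]] //.
by move=> h; exists (x, y); rewrite h !eqxx.
Qed.

Lemma ext_widen_max x : ((w x, ord_max) \in ext H v) = (x == v).
Proof.
rewrite inE /= !(ltn_eqF (ltn_ord x)) /= eqxx /=.
case: existsP => [[[a b] /andP[_ /andP[_ /eqP h]]]|_] //=.
by move: (ltn_ord b); rewrite h ltnn.
Qed.

Lemma ext_max_widen y : ((ord_max, w y) \in ext H v) = (y == v).
Proof.
rewrite inE /= !(ltn_eqF (ltn_ord y)) /= eqxx /= orbF.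
case: existsP => [[[a b] /andP[_ /andP[/eqP h _]]]|_] //=.
by move: (ltn_ord a); rewrite h ltnn.
Qed.

Lemma ext_max_max : ((ord_max, ord_max) \in ext H v) = false.
Proof.
rewrite inE /= eqxx /= (gtn_eqF (ltn_ord v)) /= !orbF.
case: existsP => [[[a b] /andP[_ /andP[/eqP h _]]]|_] //=.
by move: (ltn_ord a); rewrite h ltnn.
Qed.

Lemma deg_ext_widen u : deg (ext H v) (w u) = (deg H u + (u == v))%N.
Proof.
rewrite !degE big_ord_recr /= ext_widen_max; congr (_ + _)%N.
by apply: eq_bigr => y _; rewrite ext_widen.
Qed.

Lemma deg_ext_max : deg (ext H v) ord_max = 1%N.
Proof.
rewrite degE big_ord_recr /= ext_max_max addn0.
rewrite (bigD1 v) //= ext_max_widen eqxx big1 // => y hy.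
by rewrite ext_max_widen (negbTE hy).
Qed.

Lemma sum_deg_ext : (\sum_u deg (ext H v) u = \sum_u deg H u + 2)%N.
Proof.
rewrite big_ord_recr /= deg_ext_max.
under eq_bigr do rewrite deg_ext_widen.
rewrite big_split /= -addnA; congr (_ + _)%N.
by rewrite (bigD1 v) //= eqxx big1 // => u /negbTE ->.
Qed.

End Ext.

Definition relabel n (p : {perm 'I_n}) (G : graph n) : graph n :=
  [set (p e.1, p e.2) | e in G].

Section Relabel.
Variable n : nat.
Implicit Types (p q : {perm 'I_n}) (G : graph n).

Lemma relabel_mem p G a b : ((p a, p b) \in relabel p G) = ((a, b) \in G).
Proof.
rewrite /relabel (mem_imset (f := fun e : 'I_n * 'I_n => (p e.1, p e.2)) _ (a, b)) //.
by case=> a1 b1 [a2 b2] /= [/perm_inj -> /perm_inj ->].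
Qed.

Lemma relabel_memV p G x y :
  ((x, y) \in relabel p G) = (((p^-1)%g x, (p^-1)%g y) \in G).
Proof. by rewrite -{1}(permKV p x) -{1}(permKV p y) relabel_mem. Qed.

Lemma relabelM p q G : relabel p (relabel q G) = relabel (q * p)%g G.
Proof. by apply/setP => -[x y]; rewrite !relabel_memV invMg !permM. Qed.

Lemma relabel1 G : relabel 1%g G = G.
Proof. by apply/setP => -[x y]; rewrite relabel_memV invg1 !perm1. Qed.

Lemma relabelK p : cancel (relabel p) (relabel (p^-1)%g).
Proof. by move=> G; rewrite relabelM mulgV relabel1. Qed.

Lemma relabel_inj p : injective (relabel p).
Proof. exact: can_inj (relabelK p). Qed.

Lemma deg_relabel p G u : deg (relabel p G) (p u) = deg G u.
Proof.
rewrite !degE (reindex_inj (@perm_inj _ p)) /=.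
by apply: eq_bigr => y _; rewrite relabel_mem.
Qed.

End Relabel.

Lemma lift_max_widen m (a : 'I_m) : lift ord_max a = widen_ord (leqnSn m) a.
Proof. exact/val_inj/lift_max. Qed.

Lemma ext_relabel m (p : {perm 'I_m}) (H : graph m) (v : 'I_m) :
  ext (relabel p H) (p v) = relabel (lift_perm ord_max ord_max p) (ext H v).
Proof.
set p' := lift_perm _ _ _.
apply/setP => -[x y]; rewrite -(permKV p' x) -(permKV p' y) relabel_mem.
move: ((p'^-1)%g x) ((p'^-1)%g y) => a b.
have p'_widen (c : 'I_m) :
    p' (widen_ord (leqnSn m) c) = widen_ord (leqnSn m) (p c).
  by rewrite -!lift_max_widen lift_perm_lift.
have p'_max : p' ord_max = ord_max by rewrite lift_perm_id.
case: (unliftP ord_max a) => [a'|] ->; case: (unliftP ord_max b) => [b'|] ->;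
  rewrite ?lift_max_widen ?p'_widen ?p'_max ?ext_widen ?ext_widen_max
          ?ext_max_widen ?ext_max_max ?relabel_mem //;
  by rewrite (inj_eq perm_inj).
Qed.

(* With rising factorials the expected increment of [deg_rise4] is a multiple
   of [deg_rise4] itself, see [PAmean_rise4_step]. *)
Definition rise4 (R : realType) (x : R) := x * (x + 1) * (x + 2) * (x + 3).

Definition deg_rise4 (R : realType) n (G : graph n) : R :=
  \sum_v rise4 (deg G v)%:R.

(* Written as a sum so that it also makes sense on [graph 0]. *)
Definition root_deg (R : realType) n (G : graph n) : R :=
  \sum_(v : 'I_n | val v == 0%N) (deg G v)%:R.

Section DegreeStatistics.
Variable R : realType.

Lemma big_deg_ext m (H : graph m) v (g : nat -> R) :
  \sum_(u : 'I_m.+1) g (deg (ext H v) u) =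
  \sum_u g (deg H u) + (g (deg H v).+1 - g (deg H v)) + g 1%N.
Proof.
rewrite big_ord_recr /= deg_ext_max; under eq_bigr do rewrite deg_ext_widen.
rewrite (bigD1 v) //= eqxx addn1 [in RHS](bigD1 v) //=.
rewrite (eq_bigr (fun u => g (deg H u))) => [|u /negbTE ->]; last by rewrite addn0.
ring.
Qed.

Lemma deg_rise4_ext m (H : graph m) v :
  deg_rise4 R (ext H v) = deg_rise4 R H +
    4 * (((deg H v)%:R + 1) * ((deg H v)%:R + 2) * ((deg H v)%:R + 3)) + 24.
Proof.
rewrite /deg_rise4 (big_deg_ext H v (fun d => rise4 (d%:R : R))) /rise4.
rewrite -addn1 natrD; ring.
Qed.

Lemma root_deg_ext m (H : graph m) v : (0 < m)%N ->
  root_deg R (ext H v) = root_deg R H + (val v == 0%N)%:R.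
Proof.
move=> m_gt0; rewrite /root_deg big_mkcond big_ord_recr /= gtn_eqF // addr0.
under eq_bigr do rewrite deg_ext_widen natrD.
rewrite [in RHS]big_mkcond /=.
rewrite (eq_bigr (fun u : 'I_m => (if val u == 0%N then (deg H u)%:R else 0) +
   (if val u == 0%N then (u == v)%:R else 0 : R))); last first.
  by move=> u _; case: (val u == 0%N); rewrite ?addr0.
rewrite big_split /=; congr (_ + _).
rewrite (bigD1 v) //= eqxx big1 ?addr0; first by case: (val v == 0%N).
by move=> u /negbTE ->; case: (val u == 0%N).
Qed.

Lemma deg_rise4_ge0 n (G : graph n) : 0 <= deg_rise4 R G.
Proof. by apply: sumr_ge0 => v _; rewrite /rise4 !mulr_ge0 ?addr_ge0. Qed.

Lemma root_deg_ge0 n (G : graph n) : 0 <= root_deg R G.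
Proof. exact: sumr_ge0. Qed.

Lemma root_deg4_le_deg_rise4 n (G : graph n) : root_deg R G ^+ 4 <= deg_rise4 R G.
Proof.
case: n G => [|n] G; first by rewrite /root_deg big_ord0 expr0n deg_rise4_ge0.
rewrite /root_deg (big_pred1 ord0) => [|v]; last by rewrite /= -val_eqE.
rewrite /deg_rise4 (bigD1 ord0) //=.
set d : R := (deg G ord0)%:R.
have d_ge0 : 0 <= d by [].
have d4_le : d ^+ 4 <= rise4 d.
  rewrite /rise4 !exprS expr0 mulr1.
  have : 0 <= d * d by rewrite mulr_ge0.
  have : 0 <= d * (d * d) by rewrite !mulr_ge0.
  nra.
apply: le_trans d4_le _; rewrite lerDl.
by apply: sumr_ge0 => v _; rewrite /rise4 !mulr_ge0 ?addr_ge0.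
Qed.

Lemma deg_rise4_relabel n (p : {perm 'I_n}) (G : graph n) :
  deg_rise4 R (relabel p G) = deg_rise4 R G.
Proof.
rewrite /deg_rise4 [LHS](reindex_inj (@perm_inj _ p)) /=.
by apply: eq_bigr => v _; rewrite deg_relabel.
Qed.

End DegreeStatistics.

Section WeightedSums.
Variables (R : realType) (I : finType) (P : I -> R).
Hypothesis P_ge0 : forall i, 0 <= P i.

Lemma sum_weight_sub (p q : pred I) :
  subpred p q -> \sum_(i | p i) P i <= \sum_(i | q i) P i.
Proof.
move=> pq; rewrite [X in X <= _]big_mkcond [X in _ <= X]big_mkcond.
apply: ler_sum => i _; case pi: (p i); first by rewrite (pq _ pi).
by case: (q i).
Qed.

Lemma markov_sum (f : I -> R) x : 0 < x -> (forall i, 0 <= f i) ->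
  \sum_(i | x <= f i) P i <= (\sum_i P i * f i) / x.
Proof.
move=> x_gt0 f_ge0; rewrite mulr_suml.
apply: le_trans (_ : \sum_(i | x <= f i) P i * f i / x <= _).
  apply: ler_sum => i xf; rewrite -mulrA ler_peMr //.
  by rewrite ler_pdivlMr // mul1r.
rewrite [X in _ <= X](bigID (fun i => x <= f i)) /= lerDl.
by apply: sumr_ge0 => i _; rewrite !mulr_ge0 ?invr_ge0 // ltW.
Qed.

Lemma chebyshev_sum (f : I -> R) a c : 0 < c ->
  \sum_(i | f i < a - c) P i <= (\sum_i P i * (f i - a) ^+ 2) / c ^+ 2.
Proof.
move=> c_gt0; have c2_gt0 : 0 < c ^+ 2 by exact: exprn_gt0.
apply: le_trans (markov_sum c2_gt0 (fun i => sqr_ge0 (f i - a))).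
apply: sum_weight_sub => i /= fi_lt.
rewrite -[(f i - a) ^+ 2]sqrrN opprB ler_sqr ?nnegrE; lra.
Qed.

End WeightedSums.

Section TotalVariation.
Variables (R : realType) (n : nat).
Implicit Types (P Q f : graph n -> R) (A : {set graph n}).

Lemma prob_evE P A : prob_ev P A = \sum_G P G * (G \in A)%:R.
Proof.
rewrite /prob_ev big_mkcond; apply: eq_bigr => G _.
by case: (G \in A); rewrite ?mulr1 ?mulr0.
Qed.

Lemma prob_ev_dist_le_TV P Q A :
  iso_invariant A -> `|prob_ev P A - prob_ev Q A| <= TV P Q.
Proof.
by move=> iA; rewrite /TV (bigD1 A) ?le_max ?lexx //=; apply/asboolP.
Qed.

Lemma TV_ge0 P Q : 0 <= TV P Q.
Proof.
rewrite /TV; apply: (big_ind (fun x => 0 <= x)) => // x y x_ge0 _.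
by rewrite le_max x_ge0.
Qed.

Lemma TVC P Q : TV P Q = TV Q P.
Proof. by apply: eq_bigr => A _; rewrite distrC. Qed.

Lemma TV_le P Q c : 0 <= c ->
  (forall A, iso_invariant A -> `|prob_ev P A - prob_ev Q A| <= c) ->
  TV P Q <= c.
Proof.
move=> c_ge0 le_c; rewrite /TV; apply: (big_ind (fun x => x <= c)) => //.
  by move=> x y; rewrite ge_max => -> ->.
by move=> A /asboolP; apply: le_c.
Qed.

Lemma prob_ev_ge0 P A : (forall G, 0 <= P G) -> 0 <= prob_ev P A.
Proof. by move=> P_ge0; apply: sumr_ge0. Qed.

Lemma prob_ev_le1 P A : (forall G, 0 <= P G) -> \sum_G P G = 1 -> prob_ev P A <= 1.
Proof.
move=> P_ge0 <-; rewrite [X in _ <= X](bigID (mem A)) /= lerDl.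
exact: sumr_ge0.
Qed.

Lemma TV_le1 P Q : (forall G, 0 <= P G) -> \sum_G P G = 1 ->
  (forall G, 0 <= Q G) -> \sum_G Q G = 1 -> TV P Q <= 1.
Proof.
move=> P_ge0 P1 Q_ge0 Q1; apply: TV_le => // A _.
have := prob_ev_ge0 A P_ge0; have := prob_ev_le1 A P_ge0 P1.
have := prob_ev_ge0 A Q_ge0; have := prob_ev_le1 A Q_ge0 Q1.
rewrite ler_norml; lra.
Qed.

Definition symmetrize P G := \sum_(p : {perm 'I_n}) P (relabel p G).
Definition relabel_invariant f := forall p G, f (relabel p G) = f G.

Lemma symmetrize_invariant P : relabel_invariant (symmetrize P).
Proof.
move=> q G; rewrite /symmetrize [RHS](reindex_inj (mulgI q)) /=.
by apply: eq_bigr => p _; rewrite relabelM.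
Qed.

Lemma sum_symmetrize P f : relabel_invariant f ->
  \sum_G symmetrize P G * f G = #|{perm 'I_n}|%:R * \sum_G P G * f G.
Proof.
move=> f_inv; under eq_bigr do rewrite mulr_suml.
rewrite exchange_big /= -sumr_const mulr_suml; apply: eq_bigr => p _.
rewrite mul1r (reindex_inj (@relabel_inj _ (p^-1)%g)) /=.
by apply: eq_bigr => G _; rewrite relabelM mulVg relabel1 f_inv.
Qed.

Lemma sum_diff_symmetrize P Q f : relabel_invariant f ->
  \sum_G (P G - Q G) * f G =
  #|{perm 'I_n}|%:R^-1 * \sum_G (symmetrize P G - symmetrize Q G) * f G.
Proof.
move=> f_inv; under eq_bigr do rewrite mulrBl.
under [in RHS]eq_bigr do rewrite mulrBl.
rewrite !sumrB !sum_symmetrize // -mulrBr mulKf // pnatr_eq0 -lt0n.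
by apply/card_gt0P; exists 1%g.
Qed.

(* Averaging over relabellings makes the optimal threshold event
   [{symmetrize Q < symmetrize P}] isomorphism invariant. *)
Lemma sum_diff_le_TV P Q f : relabel_invariant f -> (forall G, 0 <= f G <= 1) ->
  \sum_G (P G - Q G) * f G <= TV P Q.
Proof.
move=> f_inv f01; set B := [set G | symmetrize Q G < symmetrize P G].
have B_mem p G : (relabel p G \in B) = (G \in B).
  by rewrite !inE !symmetrize_invariant.
have B_inv : iso_invariant B by move=> p G; exact: esym (B_mem p G).
apply: le_trans (le_trans (ler_norm _) (prob_ev_dist_le_TV P Q B_inv)).
rewrite !prob_evE -sumrB; under [X in _ <= X]eq_bigr do rewrite -mulrBl.
have B_ind : relabel_invariant (fun G => (G \in B)%:R) by move=> p G; rewrite B_mem.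
rewrite (sum_diff_symmetrize P Q f_inv) (sum_diff_symmetrize P Q B_ind).
rewrite ler_pM2l ?invr_gt0 ?ltr0n; last by apply/card_gt0P; exists 1%g.
apply: ler_sum => G _; have /andP[f_ge0 f_le1] := f01 G; rewrite inE.
case: ltrP => [lt|le] /=.
  by rewrite mulr1 ler_piMr // subr_ge0 ltW.
by rewrite mulr0 mulr_le0_ge0 // subr_le0.
Qed.

Lemma mean_dist_le_TV P Q f : relabel_invariant f -> (forall G, 0 <= f G <= 1) ->
  `|\sum_G (P G - Q G) * f G| <= TV P Q.
Proof.
move=> f_inv f01; rewrite ler_norml sum_diff_le_TV // andbT lerNl -sumrN.
rewrite TVC; under eq_bigr do rewrite -mulNr opprB.
exact: sum_diff_le_TV.
Qed.

End TotalVariation.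

Definition attach_prob (R : realType) m (H : graph m) (v : 'I_m) : R :=
  (deg H v)%:R / (2 * m.-1)%:R.

(* Capped at 1 so that it lies in [0, 1] also off the support of the law,
   where the attachment probabilities need not sum to 1. *)
Definition step_prob (R : realType) m (A : {set graph m.+1}) (H : graph m) : R :=
  Num.min (\sum_v attach_prob R H v * (ext H v \in A)%:R) 1.

Lemma attach_prob_ge0 (R : realType) m (H : graph m) v : 0 <= attach_prob R H v.
Proof. exact: divr_ge0. Qed.

Lemma step_prob_invariant (R : realType) m (A : {set graph m.+1}) :
  iso_invariant A -> relabel_invariant (step_prob R A).
Proof.
move=> A_inv p H; rewrite /step_prob; congr (Num.min _ _).
rewrite [LHS](reindex_inj (@perm_inj _ p)) /=; apply: eq_bigr => v _.
rewrite /attach_prob deg_relabel ext_relabel.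
by rewrite (A_inv (lift_perm ord_max ord_max p) (ext H v)).
Qed.

Lemma step_prob_in01 (R : realType) m (A : {set graph m.+1}) H :
  0 <= step_prob R A H <= 1.
Proof.
rewrite /step_prob le_min ge_min lexx orbT ler01 !andbT /=.
by apply: sumr_ge0 => v _; rewrite mulr_ge0 ?attach_prob_ge0.
Qed.

Section PreferentialAttachment.
Variables (R : realType) (k : nat) (T : graph k.+1).
Hypotheses (sum_deg_T : (\sum_v deg T v)%N = (2 * k)%N) (k_gt0 : (0 < k)%N).
Local Notation P := (PAlaw R T).
Local Notation w := (attach_prob R).

Lemma PA_seedE (G : graph k.+1) : P G = (G == T)%:R.
Proof. by rewrite /= leqnn emb_id. Qed.

Lemma PA_stepE m (G : graph m.+1) : (k < m)%N ->
  P G = \sum_(H : graph m) \sum_v P H * w H v * (G == ext H v)%:R.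
Proof. by move=> km; rewrite /= ltnS leqNgt km. Qed.

Lemma PA_ge0 n (G : graph n) : 0 <= P G.
Proof.
elim: n G => [|m IH] G /=; first exact: ler0n.
case: ifP => _ //; apply: sumr_ge0 => H _; apply: sumr_ge0 => v _.
by rewrite !mulr_ge0 ?attach_prob_ge0.
Qed.

Definition PAmean n (f : graph n -> R) := \sum_G P G * f G.

Lemma PAmean_seed (f : graph k.+1 -> R) : PAmean f = f T.
Proof.
rewrite /PAmean (bigD1 T) // PA_seedE eqxx mul1r big1 => [|G GT]; first exact: addr0.
by rewrite PA_seedE (negbTE GT) mul0r.
Qed.

Lemma PAmean_step m (f : graph m.+1 -> R) : (k < m)%N ->
  PAmean f = \sum_(H : graph m) P H * \sum_v w H v * f (ext H v).
Proof.
move=> km; rewrite /PAmean.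
under eq_bigr => G _ do rewrite PA_stepE // mulr_suml.
under eq_bigr => G _ do under eq_bigr => H _ do rewrite mulr_suml.
rewrite exchange_big; apply: eq_bigr => H _.
rewrite exchange_big mulr_sumr; apply: eq_bigr => v _.
rewrite (bigD1 (ext H v)) //= eqxx big1 ?addr0 => [|G /negbTE ->]; last first.
  by rewrite mulr0 mul0r.
by rewrite mulr1 mulrA.
Qed.

Lemma PA_sum_deg n : (k < n)%N ->
  forall G : graph n, P G != 0 -> (\sum_v deg G v = 2 * n.-1)%N.
Proof.
move: n; apply: nat_ind_from => [G|n kn IH G PG].
  by rewrite PA_seedE pnatr_eq0 eqb0 negbK => /eqP ->.
have [[H v] /= /andP[PH /eqP ->]|none] :=
  pickP (fun Hv : graph n * 'I_n => (P Hv.1 != 0) && (G == ext Hv.1 Hv.2)).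
  by rewrite sum_deg_ext IH //; lia.
move: PG; rewrite PA_stepE // big1 ?eqxx // => H _; rewrite big1 // => v _.
have [->|PH] := eqVneq (P H) 0; first by rewrite !mul0r.
by move: (none (H, v)); rewrite /= PH /= => ->; rewrite mulr0.
Qed.

Lemma attach_prob_sum1 m (H : graph m) : (k < m)%N -> P H != 0 ->
  \sum_v w H v = 1.
Proof.
move=> km PH; rewrite -mulr_suml -natr_sum PA_sum_deg // divff //.
by rewrite pnatr_eq0; lia.
Qed.

Lemma sum_attach_prob_const m (H : graph m) c : (k < m)%N -> P H != 0 ->
  \sum_v w H v * c = c.
Proof. by move=> km PH; rewrite -mulr_suml attach_prob_sum1 ?mul1r. Qed.

Lemma PA_sum1 n : (k < n)%N -> \sum_(G : graph n) P G = 1.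
Proof.
have mean1 m : \sum_(G : graph m) P G = PAmean (fun _ : graph m => 1).
  by apply: eq_bigr => G _; rewrite mulr1.
move: n; apply: nat_ind_from => [|m km IH]; first by rewrite mean1 PAmean_seed.
rewrite mean1 PAmean_step // -[RHS]IH; apply: eq_bigr => H _.
have [->|PH] := eqVneq (P H) 0; first by rewrite mul0r.
by rewrite sum_attach_prob_const ?mulr1.
Qed.

Lemma PAmean_affine_step m (f : graph m.+1 -> R) (g : graph m -> R) c a :
  (k < m)%N ->
  (forall H, P H != 0 -> \sum_v w H v * f (ext H v) = (1 + c) * g H + a) ->
  PAmean f = (1 + c) * PAmean g + a.
Proof.
move=> km fg; rewrite PAmean_step //.
transitivity (\sum_H ((1 + c) * (P H * g H) + a * P H)).
  apply: eq_bigr => H _; have [->|PH] := eqVneq (P H) 0; first by ring.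
  by rewrite (fg H PH); ring.
by rewrite big_split /= -!mulr_sumr PA_sum1 // mulr1.
Qed.

Lemma sum_attach_prob_root m (H : graph m) :
  \sum_v w H v * (val v == 0%N)%:R = root_deg R H / (2 * m.-1)%:R.
Proof.
rewrite /root_deg mulr_suml [RHS]big_mkcond; apply: eq_bigr => v _.
by case: (val v == 0%N); rewrite /= ?mulr1n ?mulr0n ?mulr1 ?mulr0 ?mul0r.
Qed.

Lemma PAmean_rise4_step m : (k < m)%N ->
  PAmean (@deg_rise4 R m.+1) = (1 + 2 / (m.-1)%:R) * PAmean (@deg_rise4 R m) + 24.
Proof.
move=> km; apply: PAmean_affine_step => // H PH.
have m1_neq0 : (m.-1)%:R != 0 :> R by rewrite pnatr_eq0; lia.
transitivity (\sum_v (w H v * (deg_rise4 R H + 24) +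
                      2 / (m.-1)%:R * rise4 (deg H v)%:R)).
  apply: eq_bigr => v _; rewrite deg_rise4_ext /attach_prob /rise4 natrM.
  by field; rewrite m1_neq0.
rewrite big_split /= sum_attach_prob_const // -mulr_sumr -/(deg_rise4 R H).
ring.
Qed.

Lemma PAmean_root_deg_step m : (k < m)%N ->
  PAmean (@root_deg R m.+1) = (1 + 1 / (2 * m.-1)%:R) * PAmean (@root_deg R m).
Proof.
move=> km; rewrite -[RHS]addr0; apply: PAmean_affine_step => // H PH.
have m_gt0 : (0 < m)%N by lia.
under eq_bigr do rewrite (@root_deg_ext R m _ _ m_gt0) mulrDr.
by rewrite big_split /= sum_attach_prob_const // sum_attach_prob_root; ring.
Qed.

Lemma PAmean_root_deg2_step m : (k < m)%N ->
  PAmean (fun G : graph m.+1 => root_deg R G * (root_deg R G + 1)) =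
  (1 + 2 / (2 * m.-1)%:R) *
    PAmean (fun G : graph m => root_deg R G * (root_deg R G + 1)).
Proof.
move=> km; rewrite -[RHS]addr0; apply: PAmean_affine_step => // H PH.
have m_gt0 : (0 < m)%N by lia.
transitivity (\sum_v (w H v * (root_deg R H * (root_deg R H + 1)) +
                      (2 * root_deg R H + 2) * (w H v * (val v == 0%N)%:R))).
  apply: eq_bigr => v _; rewrite root_deg_ext //.
  by case: (val v == 0%N); rewrite /= ?mulr1n ?mulr0n; ring.
rewrite big_split /= sum_attach_prob_const // -mulr_sumr sum_attach_prob_root.
ring.
Qed.

Lemma PA_prob_step m (A : {set graph m.+1}) : (k < m)%N ->
  prob_ev (PAlaw R T (n := m.+1)) A = \sum_(H : graph m) P H * step_prob R A H.
Proof.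
move=> km; rewrite prob_evE.
transitivity (PAmean (fun G : graph m.+1 => (G \in A)%:R)) => //.
rewrite PAmean_step //; apply: eq_bigr => H _.
have [->|PH] := eqVneq (P H) 0; first by rewrite !mul0r.
rewrite /step_prob min_l // -[X in _ <= X](attach_prob_sum1 km PH).
apply: ler_sum => v _; rewrite ler_piMr ?attach_prob_ge0 //.
by case: (_ \in _).
Qed.

Definition rise4_const := (deg_rise4 R T + 24 * (k.+1)%:R) / ((k.+1)%:R * k%:R).

Lemma rise4_const_ge0 : 0 <= rise4_const.
Proof. by rewrite divr_ge0 ?mulr_ge0 ?addr_ge0 ?deg_rise4_ge0. Qed.

(* [rise4_const * n * (n - 1) - 24 * n] is exact at the seed and a supersolution
   of the recursion of [PAmean_rise4_step]. *)
Lemma PAmean_rise4_le n : (k < n)%N ->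
  PAmean (@deg_rise4 R n) <= rise4_const * (n%:R * (n.-1)%:R) - 24 * n%:R.
Proof.
move: n; apply: nat_ind_from => [|m km IH].
  rewrite PAmean_seed /rise4_const divfK; first lra.
  by rewrite mulf_neq0 // pnatr_eq0 -lt0n.
rewrite PAmean_rise4_step //.
have [M m_eq] : exists M, m = M.+2 by exists m.-2; lia.
subst m; rewrite /=.
set x : R := M%:R; have x_ge0 : 0 <= x by [].
have [e1 e2 e3] : [/\ M.+1%:R = x + 1, M.+2%:R = x + 2 & M.+3%:R = x + 3 :> R].
  by rewrite -[M.+3]addn3 -[M.+2]addn2 -[M.+1]addn1 !natrD.
rewrite e1 e2 e3 in IH *.
set c := 1 + 2 / (x + 1); have c_ge0 : 0 <= c by rewrite addr_ge0 ?divr_ge0 //; lra.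
have := ler_wpM2l c_ge0 IH.
have -> : c * (rise4_const * ((x + 2) * (x + 1)) - 24 * (x + 2)) =
    rise4_const * ((x + 3) * (x + 2)) - 24 * (x + 3) - 24 - 48 / (x + 1).
  by rewrite /c; field; lra.
have : 0 <= 48 / (x + 1) by rewrite divr_ge0 //; lra.
lra.
Qed.

Lemma PA_rise4_large_le n x : (k < n)%N -> 0 < x ->
  \sum_(G : graph n | x <= deg_rise4 R G) P G <=
  rise4_const * (n%:R * (n.-1)%:R) / x.
Proof.
move=> kn x_gt0; apply: le_trans (markov_sum (@PA_ge0 n) x_gt0 (@deg_rise4_ge0 R n)) _.
rewrite ler_pM2r ?invr_gt0 //; apply: le_trans (PAmean_rise4_le kn) _.
by rewrite lerBlDr lerDl mulr_ge0.
Qed.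

Section RootDegree.
Hypothesis root_deg_T_gt0 : 0 < root_deg R T.
Local Notation d0 := (root_deg R T).

Lemma PAmean_root_deg_gt0 n : (k < n)%N -> 0 < PAmean (@root_deg R n).
Proof.
move: n; apply: nat_ind_from => [|m km IH]; first by rewrite PAmean_seed.
by rewrite PAmean_root_deg_step // mulr_gt0.
Qed.

Lemma PAmean_root_deg2_le n : (k < n)%N ->
  PAmean (fun G : graph n => root_deg R G * (root_deg R G + 1)) * d0 <=
  (d0 + 1) * PAmean (@root_deg R n) ^+ 2.
Proof.
move: n; apply: nat_ind_from => [|m km IH].
  by rewrite !PAmean_seed le_eqVlt; apply/orP; left; apply/eqP; ring.
rewrite PAmean_root_deg_step // PAmean_root_deg2_step //.
set c : R := 1 / (2 * m.-1)%:R; have c_ge0 : 0 <= c by rewrite divr_ge0.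
have -> : 2 / (2 * m.-1)%:R = 2 * c :> R by rewrite /c mul1r.
move: IH; set B := PAmean _; set A := PAmean _ => IH.
have d0_ge0 : 0 <= d0 by exact: ltW.
have c2_ge0 : 0 <= 1 + 2 * c by lra.
have := ler_wpM2l c2_ge0 IH.
have rhs_ge0 : 0 <= (d0 + 1) * A ^+ 2 by rewrite mulr_ge0 ?sqr_ge0 //; lra.
have := mulr_ge0 (mulr_ge0 c_ge0 c_ge0) rhs_ge0.
rewrite !expr2; nra.
Qed.

Lemma PAmean_root_deg_growth n : (k < n)%N ->
  d0 ^+ 4 * (n%:R * (n.-1)%:R) <= PAmean (@root_deg R n) ^+ 4 * ((k.+1)%:R * k%:R).
Proof.
move: n; apply: nat_ind_from => [|m km IH]; first by rewrite PAmean_seed.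
rewrite PAmean_root_deg_step //.
have [M m_eq] : exists M, m = M.+2 by exists m.-2; lia.
subst m; rewrite /=.
set x : R := M%:R; have x_ge0 : 0 <= x by [].
have [e1 e2 e3] : [/\ M.+1%:R = x + 1, M.+2%:R = x + 2 & M.+3%:R = x + 3 :> R].
  by rewrite -[M.+3]addn3 -[M.+2]addn2 -[M.+1]addn1 !natrD.
rewrite e1 e2 e3 natrM e1 in IH *.
move: IH; set A := PAmean _ => IH.
set c : R := 1 / (2 * (x + 1)); have c_ge0 : 0 <= c by rewrite divr_ge0 //; lra.
have -> : d0 ^+ 4 * ((x + 3) * (x + 2)) = (1 + 4 * c) * (d0 ^+ 4 * ((x + 2) * (x + 1))).
  by rewrite /c; field; lra.
have c4 : 1 + 4 * c <= (1 + c) ^+ 4.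
  have c2_ge0 := mulr_ge0 c_ge0 c_ge0; have c3_ge0 := mulr_ge0 c2_ge0 c_ge0.
  have := mulr_ge0 c3_ge0 c_ge0; rewrite !exprS expr0; nra.
apply: le_trans (ler_wpM2l _ IH) _; first lra.
rewrite exprMn (mulrA (1 + 4 * c)); apply: ler_wpM2r; first by rewrite mulr_ge0.
by apply: ler_wpM2r c4; rewrite exprn_ge0 // ltW // PAmean_root_deg_gt0.
Qed.

Lemma PAmean_root_deg_var_le n : (k < n)%N ->
  PAmean (fun G : graph n => (root_deg R G - PAmean (@root_deg R n)) ^+ 2) <=
  PAmean (@root_deg R n) ^+ 2 / d0.
Proof.
move=> kn; have a_gt0 := PAmean_root_deg_gt0 kn; have b_le := PAmean_root_deg2_le kn.
have expand x : PAmean (fun G : graph n => (root_deg R G - x) ^+ 2) =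
    PAmean (fun G : graph n => root_deg R G * (root_deg R G + 1)) -
    (2 * x + 1) * PAmean (@root_deg R n) + x ^+ 2.
  transitivity (\sum_(G : graph n) (P G * (root_deg R G * (root_deg R G + 1)) -
      (2 * x + 1) * (P G * root_deg R G) + x ^+ 2 * P G)).
    by apply: eq_bigr => G _; ring.
  by rewrite !big_split /= sumrN -!mulr_sumr PA_sum1 ?mulr1.
rewrite expand; move: a_gt0 b_le; set a := PAmean _; set b := PAmean _ => a_gt0 b_le.
rewrite ler_pdivlMr //; have := mulr_gt0 a_gt0 root_deg_T_gt0; nra.
Qed.

Lemma PA_root_deg_small_le n : (k < n)%N ->
  \sum_(G : graph n | root_deg R G < PAmean (@root_deg R n) / 2) P G <= 4 / d0.
Proof.
move=> kn; have a_gt0 := PAmean_root_deg_gt0 kn; set a := PAmean _ in a_gt0 *.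
have half_gt0 : 0 < a / 2 by rewrite divr_gt0.
have := chebyshev_sum (@PA_ge0 n) (@root_deg R n) a half_gt0.
have -> : a - a / 2 = a / 2 by field.
move/le_trans; apply; rewrite ler_pdivrMr ?exprn_gt0 //.
apply: le_trans (PAmean_root_deg_var_le kn) _.
by rewrite -/a le_eqVlt; apply/orP; left; apply/eqP; field; rewrite gt_eqF.
Qed.

Lemma PA_rise4_large_ge n : (k < n)%N ->
  1 - 4 / d0 <=
  \sum_(G : graph n | (PAmean (@root_deg R n) / 2) ^+ 4 <= deg_rise4 R G) P G.
Proof.
move=> kn; have a_gt0 := PAmean_root_deg_gt0 kn; set a := PAmean _ in a_gt0 *.
have := PA_root_deg_small_le kn; rewrite -/a.
have := PA_sum1 kn; rewrite (bigID (fun G => root_deg R G < a / 2)) /=.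
suff : \sum_(G : graph n | ~~ (root_deg R G < a / 2)) P G <=
       \sum_(G : graph n | (a / 2) ^+ 4 <= deg_rise4 R G) P G by lra.
apply: (sum_weight_sub (@PA_ge0 n)) => G /=; rewrite -leNgt => le_root.
apply: le_trans (root_deg4_le_deg_rise4 R G).
by rewrite lerXn2r ?nnegrE ?root_deg_ge0 // divr_ge0 // ltW.
Qed.

End RootDegree.

End PreferentialAttachment.

Section Monotonicity.
Variables (R : realType) (kS kT : nat) (S : graph kS.+1) (T : graph kT.+1).
Hypotheses (sum_deg_S : (\sum_v deg S v)%N = (2 * kS)%N) (kS_gt0 : (0 < kS)%N).
Hypotheses (sum_deg_T : (\sum_v deg T v)%N = (2 * kT)%N) (kT_gt0 : (0 < kT)%N).
Local Notation u n := (TV_PA R n S T).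

Lemma TV_PA_succ_le m : (kS < m)%N -> (kT < m)%N -> u m.+1 <= u m.
Proof.
move=> kSm kTm; apply: TV_le => [|A A_inv]; first exact: TV_ge0.
rewrite (PA_prob_step R sum_deg_S kS_gt0 A kSm) (PA_prob_step R sum_deg_T kT_gt0 A kTm).
rewrite -sumrB; under eq_bigr do rewrite -mulrBl.
apply: mean_dist_le_TV => [|H]; [exact: step_prob_invariant | exact: step_prob_in01].
Qed.

Lemma TV_PA_le1 n : (kS < n)%N -> (kT < n)%N -> u n <= 1.
Proof.
move=> kSn kTn; apply: TV_le1.
- exact: PA_ge0.
- exact: (PA_sum1 R sum_deg_S kS_gt0 kSn).
- exact: PA_ge0.
- exact: (PA_sum1 R sum_deg_T kT_gt0 kTn).
Qed.

Lemma TV_PA_cvg : cvgn (fun n => u n).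
Proof.
set N := maxn kS.+1 kT.+1.
apply/cvg_ex; exists (inf (range (fun n => u (n + N)))).
rewrite -(cvg_shiftn N); apply: nonincreasing_cvgn.
  apply/nonincreasing_seqP => n /=; rewrite addSn.
  by apply: TV_PA_succ_le; rewrite /N; lia.
by exists 0 => _ [n _ <-]; apply: TV_ge0.
Qed.

Lemma lim_TV_PA_le1 : limn (fun n => u n) <= 1.
Proof.
apply: limr_le; first exact: TV_PA_cvg.
by exists (maxn kS.+1 kT.+1) => // n /= kn; apply: TV_PA_le1; lia.
Qed.

End Monotonicity.

Lemma deg_star0 k : deg (star k.+1) ord0 = k.
Proof.
rewrite degE big_ord_recl inE /= add0n -[RHS]muln1 -[in RHS](card_ord k).
by rewrite -sum_nat_const; apply: eq_bigr => i _; rewrite inE.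
Qed.

Lemma deg_star_lift k i : deg (star k.+1) (lift ord0 i) = 1%N.
Proof. by rewrite degE big_ord_recl inE /= big1 // => j _; rewrite inE. Qed.

Lemma sum_deg_star k : (\sum_v deg (star k.+1) v)%N = (2 * k)%N.
Proof.
rewrite big_ord_recl deg_star0; under eq_bigr do rewrite deg_star_lift.
by rewrite sum_nat_const card_ord; lia.
Qed.

Lemma root_deg_star (R : realType) k : root_deg R (star k.+1) = k%:R.
Proof. by rewrite /root_deg (big_pred1 ord0) ?deg_star0. Qed.

Definition rise4_atleast (R : realType) n (x : R) : {set graph n} :=
  [set G | x <= deg_rise4 R G].

Lemma rise4_atleast_invariant (R : realType) n (x : R) :
  iso_invariant (rise4_atleast n x).
Proof.
move=> p G; rewrite !inE; have := deg_rise4_relabel R p G.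
by rewrite /relabel => ->.
Qed.

Lemma prob_ev_rise4_atleast (R : realType) n (P : graph n -> R) x :
  prob_ev P (rise4_atleast n x) = \sum_(G | x <= deg_rise4 R G) P G.
Proof. by apply: eq_bigl => G; rewrite inE. Qed.

Section StarVersusTree.
Variables (R : realType) (kS kT : nat) (T : graph kT.+1).
Hypotheses (sum_deg_T : (\sum_v deg T v)%N = (2 * kT)%N) (kT_gt0 : (0 < kT)%N).
Hypothesis kS_gt0 : (0 < kS)%N.
Local Notation K := (rise4_const R T).
Local Notation a n := (PAmean (star kS.+1) (@root_deg R n)).

Lemma root_deg_star_gt0 : 0 < root_deg R (star kS.+1).
Proof. by rewrite root_deg_star ltr0n. Qed.

Lemma PAmean_star_root_deg_gt0 n : (kS < n)%N -> 0 < a n.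
Proof. exact: (PAmean_root_deg_gt0 (sum_deg_star kS) kS_gt0 root_deg_star_gt0). Qed.

Lemma PAmean_star_root_deg4_ge n : (kS < n)%N ->
  kS%:R * (n%:R * (n.-1)%:R) <= 2 * a n ^+ 4.
Proof.
move=> kSn.
have := PAmean_root_deg_growth (sum_deg_star kS) kS_gt0 root_deg_star_gt0 kSn.
rewrite root_deg_star -natr1; set s : R := kS%:R; set Y : R := n%:R * _.
have s_ge1 : 1 <= s by rewrite ler1n.
have s3_gt0 : 0 < s ^+ 3 by rewrite exprn_gt0 //; lra.
have a4_ge0 : 0 <= a n ^+ 4 by rewrite exprn_ge0 // ltW // PAmean_star_root_deg_gt0.
move=> growth; rewrite -(ler_pM2l s3_gt0).
have -> : s ^+ 3 * (s * Y) = s ^+ 4 * Y by ring.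
apply: le_trans growth _.
have -> : s ^+ 3 * (2 * a n ^+ 4) = a n ^+ 4 * (2 * s ^+ 3) by ring.
by apply: ler_wpM2l => //; rewrite !exprS expr0; nra.
Qed.

Lemma TV_PA_star_ge n : (kS < n)%N -> (kT < n)%N ->
  1 - (4 + 32 * K) / kS%:R <= TV_PA R n (star kS.+1) T.
Proof.
move=> kSn kTn; have a_gt0 := PAmean_star_root_deg_gt0 kSn.
have x_gt0 : 0 < (a n / 2) ^+ 4 by rewrite exprn_gt0 // divr_gt0.
have s_gt0 : 0 < kS%:R :> R by rewrite ltr0n.
set A := rise4_atleast n ((a n / 2) ^+ 4).
have star_large : 1 - 4 / kS%:R <= prob_ev (PAlaw R (star kS.+1) (n:=n)) A.
  rewrite prob_ev_rise4_atleast -(root_deg_star R kS).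
  exact: (PA_rise4_large_ge (sum_deg_star kS) kS_gt0 root_deg_star_gt0 kSn).
have tree_large : prob_ev (PAlaw R T (n:=n)) A <= 32 * K / kS%:R.
  rewrite prob_ev_rise4_atleast.
  apply: le_trans (PA_rise4_large_le sum_deg_T kT_gt0 kTn x_gt0) _.
  rewrite ler_pdivrMr //.
  have -> : 32 * K / kS%:R * (a n / 2) ^+ 4 = K * (2 * a n ^+ 4) / kS%:R.
    by field; rewrite gt_eqF.
  rewrite ler_pdivlMr // -mulrA [_ * kS%:R]mulrC.
  exact: (ler_wpM2l (rise4_const_ge0 R T) (PAmean_star_root_deg4_ge kSn)).
have := prob_ev_dist_le_TV (PAlaw R (star kS.+1) (n:=n)) (PAlaw R T (n:=n))
  (@rise4_atleast_invariant R n ((a n / 2) ^+ 4)).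
rewrite /TV_PA -/A ler_norml mulrDl => /andP[_ TV_ge].
lra.
Qed.

Lemma lim_TV_PA_star_ge :
  1 - (4 + 32 * K) / kS%:R <= limn (fun n => TV_PA R n (star kS.+1) T).
Proof.
apply: limr_ge; first exact: (TV_PA_cvg (sum_deg_star kS) kS_gt0 sum_deg_T kT_gt0).
by exists (maxn kS.+1 kT.+1) => // n /= kn; apply: TV_PA_star_ge; lia.
Qed.

End StarVersusTree.

Local Open Scope classical_set_scope.

Lemma cvg_to1_squeeze (R : realType) (d : nat -> R) (C : R) :
  (forall k, (0 < k)%N -> 1 - C / k%:R <= d k.+1 <= 1) -> d @ \oo --> (1 : R).
Proof.
move=> bounds; rewrite -(cvg_shiftn 2).
apply: (@squeeze_cvgr _ _ _ _ (fun k => 1 - C * harmonic k) (fun=> 1)).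
- by apply: nearW => k; rewrite /= addn2; apply: bounds.
- rewrite -[X in _ --> X]subr0 -(mulr0 C); apply: cvgB; first exact: cvg_cst.
  by apply: cvgM; [exact: cvg_cst | exact: cvg_harmonic].
- exact: cvg_cst.
Qed.

Theorem theorem3 (R : realType) (kt : nat) (T : graph kt) :
  (2 <= kt)%N -> is_tree T ->
  exists delta : nat -> R,
    (forall k : nat, (2 <= k)%N ->
       (fun n : nat => TV_PA R n (star k) T) @ \oo --> delta k) /\
    delta @ \oo --> (1 : R).
Proof.
case: kt T => [|kT] T // kT_gt0 [_ _ card_T _].
have sum_deg_T : (\sum_v deg T v)%N = (2 * kT)%N by rewrite sum_deg_card card_T.
exists (fun k => limn (fun n => TV_PA R n (star k) T)); split.
  case=> [|kS] // kS_gt0.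
  exact: (TV_PA_cvg (sum_deg_star kS) kS_gt0 sum_deg_T kT_gt0).
apply: (@cvg_to1_squeeze _ _ (4 + 32 * rise4_const R T)) => kS kS_gt0.
by rewrite lim_TV_PA_star_ge // lim_TV_PA_le1 // sum_deg_star.
Qed.
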